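(* Let $A$ be a set of positive integers with $1\in A$. Then $G(0,A)=0$ and, for every $n\ge1$, $G(n,A)=G(n-1,A)+x$, where $x$ is the smallest element of $A$ with $\mathrm{gap}(x)>G(n-1,A)$ (if no such $x$ exists, then no integer causes the greedy algorithm to use $n$ or more coins).
   Context: For $x\in A$, let $\mathrm{gap}(x)=x'-x$ where $x'$ is the smallest element of $A$ greater than $x$, with $\mathrm{gap}(x)=\infty$ if $x=\max A$. The greedy change-making algorithm with coin values $A$, applied to a nonnegative integer $s$, uses no coins if $s=0$, and otherwise selects the largest $c\in A$ with $c\le s$ and then recursively makes change for $s-c$; the number of coins it uses is the total number of selections made. For $n\ge0$, $G(n,A)$ denotes the smallest nonnegative integer $s$ for which the greedy change-making algorithm with coin values $A$ uses at least $n$ coins. *)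

From mathcomp Require Import all_boot.
Set Implicit Arguments.
Unset Strict Implicit.
Unset Printing Implicit Defensive.

Fixpoint maxcoin (A : pred nat) (s : nat) : nat :=
  match s with
  | 0 => 0
  | s'.+1 => if A s'.+1 then s'.+1 else maxcoin A s'
  end.

Fixpoint greedy_fuel (A : pred nat) (f s : nat) : nat :=
  match f with
  | 0 => 0
  | f'.+1 =>
      if s == 0 then 0
      else let c := maxcoin A s in
           if c == 0 then 0 else (greedy_fuel A f' (s - c)).+1
  end.

(* Number of coins used by the greedy algorithm on s.  Each step removes a
   coin c >= 1 (when 1 \in A), so fuel s suffices. *)
Definition greedy (A : pred nat) (s : nat) : nat := greedy_fuel A s s.

(* s = G(n, A): the smallest s on which greedy uses at least n coins. *)
Definition isG (A : pred nat) (n s : nat) : Prop :=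
  n <= greedy A s /\ forall t, n <= greedy A t -> s <= t.

(* gap(x) = d, with d = None meaning infinity (x = max A), and
   d = Some k meaning the next element of A above x is x + k. *)
Definition is_gap (A : pred nat) (x : nat) (d : option nat) : Prop :=
  match d with
  | None => forall y, A y -> y <= x
  | Some k => 0 < k /\ A (x + k) /\ forall y, A y -> x < y -> x + k <= y
  end.

Definition gap_gt (A : pred nat) (x g : nat) : Prop :=
  exists d, is_gap A x d /\ (if d is Some k then g < k else True).

(* A sum s >= 1 needs at least n coins iff its first greedy coin c = maxcoin A s
   leaves a remainder s - c needing at least n - 1 coins, i.e. s - c >= G(n-1).
   Since c is the largest coin below s, the next coin above c exceeds s, so
   gap(c) > s - c >= G(n-1).  Conversely, for the smallest x with gap(x) > G(n-1),
   the greedy algorithm on G(n-1) + x picks x first and leaves G(n-1). *)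

From Stdlib Require Import Classical.
From mathcomp Require Import all_boot.
From mathcomp Require Import zify.

Set Implicit Arguments.
Unset Strict Implicit.
Unset Printing Implicit Defensive.

Section Greedy.

Variable A : pred nat.

Lemma maxcoin_le s : maxcoin A s <= s.
Proof. by elim: s => //= s IH; case: (A s.+1) => //; apply: leqW. Qed.

Lemma maxcoin_max s y : A y -> y <= s -> y <= maxcoin A s.
Proof.
move=> Ay; elim: s => [|s IH] /=; first by rewrite leqn0 => /eqP ->.
case As: (A s.+1) => //; rewrite leq_eqVlt => /orP [/eqP Ey|]; last exact: IH.
by rewrite Ey As in Ay.
Qed.

Lemma maxcoin_in s : 0 < maxcoin A s -> A (maxcoin A s).
Proof. by elim: s => //= s IH; case As: (A s.+1). Qed.

Lemma maxcoin_gap s x : A x -> x <= s -> (forall y, A y -> x < y -> s < y) ->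
  maxcoin A s = x.
Proof.
move=> Ax xs above; apply/eqP; rewrite eqn_leq maxcoin_max // andbT leqNgt.
apply/negP => xc; have c0 : 0 < maxcoin A s by lia.
by have := above _ (maxcoin_in c0) xc; rewrite ltnNge maxcoin_le.
Qed.

Lemma greedy_fuelE f1 f2 s : s <= f1 -> s <= f2 ->
  greedy_fuel A f1 s = greedy_fuel A f2 s.
Proof.
elim: f1 f2 s => [|f IH] [|f'] s //=; rewrite ?leqn0.
- by move=> /eqP ->.
- by move=> _ /eqP ->.
case: (s == 0) => //; case: eqP => // /eqP c0 sf sf'.
by congr S; apply: IH; lia.
Qed.

Hypothesis A1 : A 1.

Lemma maxcoin_gt0 s : 0 < s -> 0 < maxcoin A s.
Proof. exact: maxcoin_max. Qed.

Lemma greedyE s : 0 < s -> greedy A s = (greedy A (s - maxcoin A s)).+1.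
Proof.
move=> s0; move: (maxcoin_gt0 s0) (maxcoin_le s).
rewrite /greedy; case: s s0 => [|s] // _; cbn -[maxcoin subn].
move: (maxcoin A s.+1) => [|c] // _ cs /=.
by congr S; apply: greedy_fuelE => //; lia.
Qed.

End Greedy.

Lemma gap_gtP (A : pred nat) x g :
  gap_gt A x g <-> (forall y, A y -> x < y -> x + g < y).
Proof.
split.
- case=> [[k|] [gap gk]] y Ay xy /=; last by have := gap _ Ay; lia.
  by case: gap => _ [_ /(_ _ Ay xy)]; lia.
- move=> above; case: (classic (exists y, A y && (x < y))) => [ex|nex].
  + case: (ex_minnP ex) => y /andP [Ay xy] ymin.
    exists (Some (y - x)); split; last by have := above _ Ay xy; lia.
    rewrite /= subnKC ?(ltnW xy) // subn_gt0 xy.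
    by split=> //; split=> // z Az xz; apply: ymin; rewrite Az xz.
  + exists None; split=> // y Ay; rewrite leqNgt; apply/negP => xy.
    by apply: nex; exists y; rewrite Ay xy.
Qed.

Section GreedyRecursion.

Variables (A : pred nat) (n g : nat).
Hypotheses (A1 : A 1) (n_gt0 : 0 < n) (Gprev : isG A n.-1 g).

Lemma isG_sub_maxcoin t : n <= greedy A t -> 0 < t /\ g <= t - maxcoin A t.
Proof.
move=> nt; have t0 : 0 < t by case: t nt => //; rewrite /greedy /=; lia.
split=> //; apply: Gprev.2; move: nt; rewrite greedyE //; lia.
Qed.

Lemma isG_gap_gt_maxcoin t :
  n <= greedy A t -> A (maxcoin A t) /\ gap_gt A (maxcoin A t) g.
Proof.
case/isG_sub_maxcoin => t0 gt; split; first exact/maxcoin_in/maxcoin_gt0.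
apply/gap_gtP => y Ay cy; have := maxcoin_le A t.
have : t < y by rewrite ltnNge; apply/negP => /(maxcoin_max Ay); lia.
lia.
Qed.

Lemma greedy_step x : 0 < x -> A x -> gap_gt A x g -> n <= greedy A (g + x).
Proof.
move=> x0 Ax /gap_gtP above.
have mx : maxcoin A (g + x) = x.
  by apply: maxcoin_gap => // [|y Ay xy]; [lia | have := above _ Ay xy; lia].
rewrite greedyE ?addn_gt0 ?x0 ?orbT // mx addnK; have := Gprev.1; lia.
Qed.

End GreedyRecursion.

Theorem mainTheorem9 (A : pred nat)
  (hpos : forall x, A x -> 0 < x) (h1 : A 1) :
  isG A 0 0 /\
  forall n g, 1 <= n -> isG A n.-1 g ->
    (forall x, A x -> gap_gt A x g ->
       (forall y, A y -> gap_gt A y g -> x <= y) ->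
       isG A n (g + x))
    /\ ((forall x, A x -> ~ gap_gt A x g) -> forall s, greedy A s < n).
Proof.
split; first by [].
move=> n g n1 HG; split.
- move=> x Ax gx xmin; split; first exact: greedy_step (hpos _ Ax) Ax gx.
  move=> t nt; have [Ac gc] := isG_gap_gt_maxcoin h1 n1 HG nt.
  have [_ le] := isG_sub_maxcoin h1 n1 HG nt.
  have := maxcoin_le A t; have := xmin _ Ac gc; lia.
- move=> none s; rewrite ltnNge; apply/negP => ns.
  have [Ac gc] := isG_gap_gt_maxcoin h1 n1 HG ns.
  exact: none _ Ac gc.
Qed.
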